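(* Let $\mathcal X$ be a finite totally ordered set, $Q\in\mathbb R^{\mathcal X\times\mathcal X}$ an irreducible generator matrix with invariant probability vector $\pi$ having strictly positive entries ($Q^{\mathsf T}\pi=0$), and for each $x\in\mathcal X$ let $\eta_x:[0,\infty)\to[0,\infty)$ be strictly increasing with $\eta_x(0)=0$, $\eta_x(1)=1$. Set $\kappa_{xy}(\rho_x):=Q_{xy}\pi_x\eta_x(\rho_x/\pi_x)$ and, for $\rho\in\mathcal P(\mathcal X)$ and $\zeta\in\mathbb R^{\mathcal X^2/2}$, $$\mathcal H(\rho,\zeta):=\sum_{(x,y)\in\mathcal X^2/2}\Big[\kappa_{xy}(\rho_x)\big(e^{\zeta_{xy}}-1\big)+\kappa_{yx}(\rho_y)\big(e^{-\zeta_{xy}}-1\big)\Big].$$ Let $\mathcal V(\rho):=\sum_{x}\int_{\bar\rho_x}^{\rho_x}\log\eta_x(z/\pi_x)\,dz+C$ if $\rho\ge\bar\rho$ coordinatewise and $\mathcal V(\rho):=\infty$ otherwise, where each $\bar\rho_x\ge0$ is as small as possible such that $\log\eta_x(\cdot/\pi_x)$ is integrable on $[\bar\rho_x,\cdot]$ and $C$ is such that $\inf\mathcal V=0$. Then at every point of differentiability $\rho\in\mathcal P(\mathcal X)$ of $\mathcal V$ (where $d\mathcal V(\rho)_x=\log\eta_x(\rho_x/\pi_x)$), one has $\mathcal H(\rho,\nabla d\mathcal V(\rho))=0$.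
   Context: $\mathcal P(\mathcal X)$ is the set of probability vectors on $\mathcal X$. $\mathcal X^2/2:=\{(x,y)\in\mathcal X\times\mathcal X:x<y\}$. For $\xi\in\mathbb R^{\mathcal X}$ the discrete gradient is $(\nabla\xi)_{xy}:=\xi_y-\xi_x$ for $(x,y)\in\mathcal X^2/2$. (This is the statement that $\mathcal V$ is a quasipotential for the zero-range L-function with dual $\mathcal H$.) *)

From HB Require Import structures.
From mathcomp Require Import all_boot all_order all_algebra.
From mathcomp Require Import reals.
From mathcomp Require Import sequences exp.
Set Implicit Arguments. Unset Strict Implicit. Unset Printing Implicit Defensive.
Import Order.TTheory GRing.Theory Num.Theory.
Local Open Scope ring_scope.

Section Defs.
Variables (R : realType) (X : finType).

Definition generator_matrix (Q : X -> X -> R) : Prop :=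
  (forall x y, x != y -> 0 <= Q x y) /\ (forall x, \sum_(y : X) Q x y = 0).

Definition irreducible_gen (Q : X -> X -> R) : Prop :=
  forall x y, connect (fun a b => (a != b) && (0 < Q a b)) x y.

Definition prob_vec (rho : X -> R) : Prop :=
  (forall x, 0 <= rho x) /\ \sum_(x : X) rho x = 1.

Definition invariant_vec (Q : X -> X -> R) (pi : X -> R) : Prop :=
  forall y, \sum_(x : X) Q x y * pi x = 0.

Definition admissible_eta (eta : R -> R) : Prop :=
  [/\ forall a, 0 <= a -> 0 <= eta a,
      forall a b, 0 <= a -> a < b -> eta a < eta b,
      eta 0 = 0 & eta 1 = 1].

Definition kappa (Q : X -> X -> R) (pi : X -> R) (eta : X -> R -> R)
  (x y : X) (r : R) : R := Q x y * pi x * eta x (r / pi x).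

Definition dgrad (xi : X -> R) : X -> X -> R := fun x y => xi y - xi x.

Definition dV (pi : X -> R) (eta : X -> R -> R) (rho : X -> R) : X -> R :=
  fun x => ln (eta x (rho x / pi x)).

End Defs.

Definition Ham (R : realType) (d : Order.disp_t) (X : finOrderType d)
  (Q : X -> X -> R) (pi : X -> R) (eta : X -> R -> R)
  (rho : X -> R) (zeta : X -> X -> R) : R :=
  \sum_(p : X * X | (p.1 < p.2)%O)
    (kappa Q pi eta p.1 p.2 (rho p.1) * (expR (zeta p.1 p.2) - 1)
     + kappa Q pi eta p.2 p.1 (rho p.2) * (expR (- zeta p.1 p.2) - 1)).

(* With e_x := eta_x(rho_x / pi_x) > 0, the exponentials of the gradient of dV
   are the ratios e_y / e_x, so the (x, y) term of the Hamiltonian collapses to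
   f(x, y) + f(y, x) with f(x, y) := Q_xy pi_x (e_y - e_x).  Since f vanishes on
   the diagonal, summing over x < y is summing f over all pairs, and
   sum_x pi_x sum_y Q_xy (e_y - e_x) = <Q^T pi, e> = 0 because Q has zero row
   sums and pi is invariant. *)
From HB Require Import structures.
From mathcomp Require Import all_boot all_order all_algebra.
From mathcomp Require Import reals.
From mathcomp Require Import sequences exp.
From mathcomp Require Import ring.
Import Order.TTheory GRing.Theory Num.Theory.
Local Open Scope ring_scope.

Lemma sum_lt_pairs_symmetrize (d : Order.disp_t) (X : finOrderType d)
    (V : nmodType) (g : X -> X -> V) :
  (forall x, g x x = 0) ->
  \sum_(p : X * X | (p.1 < p.2)%O) (g p.1 p.2 + g p.2 p.1)
    = \sum_(p : X * X) g p.1 p.2.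
Proof.
move=> g_diag0; rewrite big_split /=.
have -> : \sum_(p : X * X | (p.1 < p.2)%O) g p.2 p.1
        = \sum_(p : X * X | (p.2 < p.1)%O) g p.1 p.2.
  by rewrite (reindex_inj (h := fun p : X * X => (p.2, p.1))) //= => -[? ?] [? ?] [-> ->].
rewrite [RHS](bigID (fun p : X * X => (p.1 < p.2)%O)) /=; congr (_ + _).
rewrite [RHS](bigID (fun p : X * X => (p.2 < p.1)%O)) /=.
rewrite [X in _ = _ + X]big1 ?addr0; last first.
  move=> [a b] /= /andP[]; rewrite -!leNgt => ba ab.
  by have -> : a = b by apply/le_anti; rewrite ab ba.
by apply: eq_bigl => -[a b] /=; case: ltgtP.
Qed.

Lemma invariant_increment_sum_eq0 (R : comPzRingType) (X : finType)
    (Q : X -> X -> R) (pi e : X -> R) :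
  (forall x, \sum_y Q x y = 0) -> (forall y, \sum_x Q x y * pi x = 0) ->
  \sum_x \sum_y Q x y * pi x * (e y - e x) = 0.
Proof.
move=> Q_rows0 pi_inv.
under eq_bigr => x _ do under eq_bigr => y _ do rewrite mulrBr.
under eq_bigr => x _ do rewrite sumrB.
rewrite sumrB exchange_big /= big1 => [|y _]; last by rewrite -mulr_suml pi_inv mul0r.
by rewrite big1 ?subr0 // => x _; rewrite -!mulr_suml Q_rows0 !mul0r.
Qed.

Lemma mul_expR_lnB_sub1 (R : realType) (a b : R) :
  0 < a -> 0 < b -> a * (expR (ln b - ln a) - 1) = b - a.
Proof.
move=> a_gt0 b_gt0.
rewrite expRD expRN !lnK ?posrE //.
by field; rewrite gt_eqF.
Qed.

Lemma admissible_eta_gt0 (R : realType) (eta : R -> R) (a : R) :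
  admissible_eta eta -> 0 < a -> 0 < eta a.
Proof. by case=> _ eta_incr eta0 _ a_gt0; rewrite -eta0 eta_incr. Qed.

Theorem proposition5p1 (R : realType) (d : Order.disp_t) (X : finOrderType d)
  (Q : X -> X -> R) (pi : X -> R) (eta : X -> R -> R)
  (hQ : generator_matrix Q) (hirr : irreducible_gen Q)
  (hpi : prob_vec pi) (hpipos : forall x, 0 < pi x) (hinv : invariant_vec Q pi)
  (heta : forall x, admissible_eta (eta x))
  (rho : X -> R) (hrho : prob_vec rho)
  (hdiff : forall x, 0 < rho x) :
  Ham Q pi eta rho (dgrad (dV pi eta rho)) = 0.
Proof.
set e := fun x => eta x (rho x / pi x).
have e_gt0 x : 0 < e x by apply/admissible_eta_gt0/divr_gt0.
pose f x y := Q x y * pi x * (e y - e x).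
have pair_term (p : X * X) :
    kappa Q pi eta p.1 p.2 (rho p.1) * (expR (dgrad (dV pi eta rho) p.1 p.2) - 1)
    + kappa Q pi eta p.2 p.1 (rho p.2) * (expR (- dgrad (dV pi eta rho) p.1 p.2) - 1)
    = f p.1 p.2 + f p.2 p.1.
  rewrite /kappa /dgrad /dV -/(e p.1) -/(e p.2) opprB -!mulrA.
  by rewrite !mul_expR_lnB_sub1 ?e_gt0 // !mulrA.
rewrite /Ham; rewrite (eq_bigr _ (fun p _ => pair_term p)).
rewrite sum_lt_pairs_symmetrize => [|x]; last by rewrite /f subrr mulr0.
rewrite -(pair_bigA _ f) /=.
exact: invariant_increment_sum_eq0 (proj2 hQ) hinv.
Qed.
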